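(* Let $F$ be a field of characteristic $0$, $n\ge 3$, and $f\in T_n$. Let $\pi:F[x_1,\dots,x_n]\to F[x_1,\dots,x_{n-2}]$ be the homomorphism with $\pi(x_{n-1})=\pi(x_n)=0$ and $\pi(x_k)=x_k$ for $k\le n-2$, and write $\overline{p_k}=x_1^k+\dots+x_{n-2}^k$. Suppose there is a polynomial $g\in F[y_1,y_3,y_5,\dots]$ (finitely many variables) with $\pi(f)=g(\overline{p_1},\overline{p_3},\overline{p_5},\dots)$. Then $f-g(p_1,p_3,p_5,\dots)$ is divisible by $\delta=\prod_{1\le k<\ell\le n}(x_k+x_\ell)$.
   Context: $p_k=x_1^k+\dots+x_n^k$. A polynomial $p\in F[x_1,\dots,x_n]$ is monotypically supersymmetric if it is symmetric and, after substituting $x_1=t,\ x_2=-t$, the result does not depend on $t$; $T_n$ is the algebra of such polynomials. *)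

From mathcomp Require Import all_boot all_order all_algebra.
From mathcomp Require Import mpoly.
Set Implicit Arguments. Unset Strict Implicit. Unset Printing Implicit Defensive.
Import GRing.Theory.
Local Open Scope ring_scope.

(* Variables x_1..x_n are 'X_0 .. 'X_(n-1). *)

Definition psum (F : fieldType) (n k : nat) : {mpoly F[n]} :=
  \sum_(i < n) 'X_i ^+ k.

(* substitution x_1 = t, x_2 = -t (t realized as the variable 'X_0,
   which no longer occurs otherwise), other variables unchanged;
   the sum below is just 'X_0 (n >= 1 here since some i : 'I_n exists) *)
Definition subst_t (F : fieldType) (n : nat) (f : {mpoly F[n]}) : {mpoly F[n]} :=
  f \mPo [tuple (if val i == 1%N then - (\sum_(k < n | val k == 0%N) 'X_k)
                 else 'X_i) | i < n].

Definition subst_0 (F : fieldType) (n : nat) (f : {mpoly F[n]}) : {mpoly F[n]} :=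
  f \mPo [tuple (if (val i < 2)%N then 0 else 'X_i) | i < n].

(* monotypically supersymmetric: symmetric, and after x_1 = t, x_2 = -t the
   result does not depend on t (i.e. equals its value at t = 0) *)
Definition mono_supersym (F : fieldType) (n : nat) (f : {mpoly F[n]}) : Prop :=
  f \is symmetric /\ subst_t f = subst_0 f.

(* pi : (the sum is 'X_i if i < n-2 and 0 otherwise) x_k |-> x_k for k <= n-2, x_(n-1), x_n |-> 0 *)
Definition proj2 (F : fieldType) (n : nat) (f : {mpoly F[n]}) : {mpoly F[n - 2]} :=
  f \mPo [tuple (\sum_(k < n - 2 | val k == val i) 'X_k) | i < n].

(* g(p_1, p_3, p_5, ...) : variable j of g is y_(2j+1) *)
Definition odd_psum_eval (F : fieldType) (m n : nat) (g : {mpoly F[m]}) : {mpoly F[n]} :=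
  g \mPo [tuple psum F n (2 * val j).+1 | j < m].

Definition delta (F : fieldType) (n : nat) : {mpoly F[n]} :=
  \prod_(k < n) \prod_(l < n | (k < l)%N) ('X_k + 'X_l).

From mathcomp Require Import all_boot all_order all_algebra.
From mathcomp Require Import fingroup perm mpoly ring zify.
Set Implicit Arguments. Unset Strict Implicit. Unset Printing Implicit Defensive.
Import GRing.Theory.
Local Open Scope ring_scope.

(* Put h = f - g(p_1, p_3, ...).  Odd power sums are monotypically
   supersymmetric and T_n is closed under substitution and subtraction, so h
   lies in T_n, and pi(h) = 0 because pi(p_k) = \overline{p_k} for k > 0.
   Given k < l, a permutation moves x_k, x_l to x_1, x_2; supersymmetry turns
   x_1 = t, x_2 = -t into x_1 = x_2 = 0, and another permutation moves these
   zeros to x_(n-1), x_n, where pi(h) = 0.  By symmetry of h, h therefore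
   vanishes at x_l = -x_k, so x_k + x_l divides h.  These linear forms are
   pairwise non-associate and F[x] is a domain, hence their product delta
   divides h. *)

Section Composition.
Variable R : comNzRingType.

Lemma comp_mpolyXU_tnth n k (t : n.-tuple {mpoly R[k]}) i : 'X_i \mPo t = tnth t i.
Proof. by rewrite comp_mpolyXU -tnth_nth. Qed.

Lemma eq_comp_mpoly n k (p : {mpoly R[n]}) (t u : n.-tuple {mpoly R[k]}) :
  (forall i, tnth t i = tnth u i) -> p \mPo t = p \mPo u.
Proof. by move=> eq_tu; congr (_ \mPo _); apply: eq_from_tnth. Qed.

Lemma comp_mpolyA n k l (p : {mpoly R[n]}) (t : n.-tuple {mpoly R[k]})
    (u : k.-tuple {mpoly R[l]}) :
  (p \mPo t) \mPo u = p \mPo [tuple tnth t i \mPo u | i < n].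
Proof.
rewrite [p \mPo t]comp_mpolyE [RHS]comp_mpolyE raddf_sum; apply: eq_bigr => m _.
rewrite /= comp_mpolyZ rmorph_prod; congr (_ *: _); apply: eq_bigr => i _.
by rewrite rmorphXn tnth_mktuple.
Qed.

Lemma symmetric_comp_perm n k (p : {mpoly R[n]}) (t : n.-tuple {mpoly R[k]})
    (s : 'S_n) :
  p \is symmetric -> p \mPo t = p \mPo [tuple tnth t (s i) | i < n].
Proof. by move/issymP=> sym_p; rewrite -msym_mPo sym_p. Qed.

Lemma msym_comp n (s : 'S_n) (p : {mpoly R[n]}) :
  msym s p = p \mPo [tuple 'X_(s i) | i < n].
Proof.
rewrite -[LHS]comp_mpoly_id msym_mPo; apply: eq_comp_mpoly => i.
by rewrite !tnth_mktuple.
Qed.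

End Composition.

Section Congruence.
Variables (A : comPzRingType) (d : A).

Definition eqmodr (a b : A) := exists q, a - b = q * d.

Lemma eqmodr_refl a : eqmodr a a.
Proof. by exists 0; rewrite subrr mul0r. Qed.

Lemma eqmodrD a b c e : eqmodr a b -> eqmodr c e -> eqmodr (a + c) (b + e).
Proof. by move=> [q1 ab] [q2 ce]; exists (q1 + q2); rewrite mulrDl -ab -ce; ring. Qed.

Lemma eqmodrM a b c e : eqmodr a b -> eqmodr c e -> eqmodr (a * c) (b * e).
Proof.
move=> [q1 ab] [q2 ce]; exists (q1 * c + b * q2).
have -> : a * c - b * e = (a - b) * c + b * (c - e) by ring.
by rewrite ab ce; ring.
Qed.

Lemma eqmodrX a b m : eqmodr a b -> eqmodr (a ^+ m) (b ^+ m).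
Proof.
move=> ab; elim: m => [|m IHm]; first by rewrite !expr0; apply: eqmodr_refl.
by rewrite !exprS; apply: eqmodrM.
Qed.

End Congruence.

Section Substitution.
Variables (R : comNzRingType) (n : nat).
Implicit Types (c d p : {mpoly R[n]}).

Lemma eqmodr_comp_mpoly d p (t : n.-tuple {mpoly R[n]}) :
  (forall i, eqmodr d 'X_i (tnth t i)) -> eqmodr d p (p \mPo t).
Proof.
move=> eq_t; rewrite -{1}(comp_mpoly_id p) !comp_mpolyE.
apply: (big_ind2 (eqmodr d)) => [|*|m _]; [exact: eqmodr_refl | exact: eqmodrD |].
rewrite -!mul_mpolyC; apply: eqmodrM; first exact: eqmodr_refl.
apply: (big_ind2 (eqmodr d)) => [|*|i _]; [exact: eqmodr_refl | exact: eqmodrM |].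
by apply: eqmodrX; rewrite tnth_mktuple.
Qed.

Definition msubst (l : 'I_n) c p := p \mPo [tuple if i == l then c else 'X_i | i < n].

Lemma msubst_eq0_factor l c p : msubst l c p = 0 -> exists q, p = q * ('X_l - c).
Proof.
move=> p0; have [q pq] : eqmodr ('X_l - c) p (msubst l c p).
  apply: eqmodr_comp_mpoly => i; rewrite tnth_mktuple.
  by case: eqP => [->|_]; [exists 1; rewrite mul1r | exact: eqmodr_refl].
by exists q; rewrite -pq p0 subr0.
Qed.

End Substitution.

Lemma msubst_prod_dvd (R : idomainType) n (I : eqType) (r : seq I)
    (v : I -> 'I_n) (c : I -> {mpoly R[n]}) (h : {mpoly R[n]}) :
  uniq r ->
  {in r &, forall a b, a != b -> msubst (v b) (c b) ('X_(v a) - c a) != 0} ->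
  {in r, forall a, msubst (v a) (c a) h = 0} ->
  exists q, h = q * \prod_(a <- r) ('X_(v a) - c a).
Proof.
elim: r h => [|a r IHr] h /=; first by exists h; rewrite big_nil mulr1.
case/andP=> a_notin_r uniq_r indep h0.
have [q1 def_h] := msubst_eq0_factor (h0 a (mem_head a r)).
rewrite {}def_h in h0 *.
have [q ->] : exists q, q1 = q * \prod_(b <- r) ('X_(v b) - c b).
  apply: IHr => // [x y xr yr|b br]; first by apply: indep; rewrite inE ?xr ?yr orbT.
  have ab : a != b by apply: contraNneq a_notin_r => ->.
  have := h0 b; rewrite inE br orbT => /(_ isT); rewrite /msubst rmorphM /=.
  move=> /eqP; rewrite mulf_eq0 => /orP[/eqP //|].
  by rewrite (negbTE (indep a b (mem_head a r) _ ab)) // inE br orbT.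
by exists q; rewrite big_cons mulrA mulrAC.
Qed.

Lemma mpolyX_add_neq0 (R : nzRingType) n (u : 'I_n) (e : {mpoly R[n]}) :
  e@_U_(u) = 0 -> 'X_u + e != 0.
Proof.
move=> eu0; apply/eqP => /(congr1 (mcoeff U_(u))).
by rewrite mcoeffD mcoeffXU eqxx eu0 mcoeff0 addr0 => /eqP; rewrite oner_eq0.
Qed.

Lemma msubst_addX_neq0 (R : comNzRingType) n (a b k l : 'I_n) :
  (a < b)%N -> (k < l)%N -> (a, b) != (k, l) ->
  msubst l (- 'X_k) ('X_a + 'X_b : {mpoly R[n]}) != 0.
Proof.
move=> lt_ab lt_kl neq_ab_kl.
rewrite /msubst comp_mpolyD !comp_mpolyXU_tnth !tnth_mktuple.
have ord_neq (x y : 'I_n) : (x < y)%N -> y != x.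
  by move=> lt_xy; rewrite -val_eqE gtn_eqF.
case: (eqVneq a l) => [a_l | a_l]; first subst a.
  rewrite (negbTE (ord_neq _ _ lt_ab)) addrC; apply: mpolyX_add_neq0.
  have lt_kb := ltn_trans lt_kl lt_ab.
  by rewrite mcoeffN mcoeffXU eq_sym (negbTE (ord_neq _ _ lt_kb)) oppr0.
case: (eqVneq b l) => [b_l | b_l]; last first.
  by apply: mpolyX_add_neq0; rewrite mcoeffXU (negbTE (ord_neq _ _ lt_ab)).
subst b; apply: mpolyX_add_neq0.
have k_a : k != a by apply: contraNneq neq_ab_kl => ->.
by rewrite mcoeffN mcoeffXU (negbTE k_a) oppr0.
Qed.

Lemma delta_dvd (F : fieldType) n (h : {mpoly F[n]}) :
  (forall k l : 'I_n, (k < l)%N -> msubst l (- 'X_k) h = 0) ->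
  exists q, h = q * delta F n.
Proof.
move=> h0; rewrite /delta pair_big_dep /= -big_filter.
set r := [seq _ <- _ | _].
have [q ->] : exists q, h = q * \prod_(p <- r) ('X_p.2 - - 'X_p.1).
  apply: msubst_prod_dvd => [|[a b] [k l]|[k l]]; rewrite ?mem_filter /=.
  - exact/filter_uniq/index_enum_uniq.
  - move=> /andP[lt_ab _] /andP[lt_kl _] neq.
    by rewrite opprK addrC; apply: msubst_addX_neq0.
  - by move=> /andP[lt_kl _]; apply: h0.
by exists q; congr (_ * _); apply: eq_bigr => p _; rewrite opprK addrC.
Qed.

Lemma exists_perm2 n (a b k l : 'I_n) :
  a != b -> k != l -> exists s : 'S_n, s a = k /\ s b = l.
Proof.
move=> a_b k_l; set t := tperm a k.
have ta : t a = k by rewrite tpermL.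
have tb_k : t b != k by rewrite -ta (inj_eq perm_inj) eq_sym.
exists (t * tperm (t b) l)%g; rewrite !permM ta tpermL tpermD //.
by rewrite eq_sym.
Qed.

Section PowerSums.
Variable F : fieldType.

Lemma psum_comp n k l (t : n.-tuple {mpoly F[l]}) :
  psum F n k \mPo t = \sum_(i < n) tnth t i ^+ k.
Proof.
rewrite /psum rmorph_sum /=; apply: eq_bigr => i _.
by rewrite rmorphXn /= comp_mpolyXU_tnth.
Qed.

Lemma psum_symmetric n k : psum F n k \is symmetric.
Proof.
apply/issymP => s; rewrite msym_comp psum_comp.
under eq_bigr do rewrite tnth_mktuple.
by rewrite [RHS](reindex_inj (@perm_inj _ s)).
Qed.

Lemma mono_supersymB n (f g : {mpoly F[n]}) :
  mono_supersym f -> mono_supersym g -> mono_supersym (f - g).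
Proof.
move=> [sym_f f_t] [sym_g g_t]; split; first exact: rpredB.
by move: f_t g_t; rewrite /subst_t /subst_0 !comp_mpolyB => -> ->.
Qed.

Lemma mono_supersym_comp m n (p : {mpoly F[m]}) (t : m.-tuple {mpoly F[n]}) :
  (forall i, mono_supersym (tnth t i)) -> mono_supersym (p \mPo t).
Proof.
move=> t_ss; split.
  by apply: mcomp_sym => i; rewrite -tnth_nth; have [] := t_ss i.
rewrite /subst_t /subst_0 !comp_mpolyA; apply: eq_comp_mpoly => i.
by rewrite !tnth_mktuple; have [] := t_ss i.
Qed.

Lemma proj2_psum n k : (0 < k)%N -> proj2 (psum F n k) = psum F (n - 2) k.
Proof.
move=> k_gt0; rewrite /proj2 psum_comp.
have expr_sum_ord (i : 'I_n) :
    (\sum_(j < n - 2 | val j == val i) 'X_j) ^+ k =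
    \sum_(j < n - 2 | val j == val i) ('X_j ^+ k : {mpoly F[n - 2]}).
  case: (ltnP i (n - 2)) => [lt_i | ge_i]; first by rewrite !(big_pred1 (Ordinal lt_i)).
  have no_j (j : 'I_(n - 2)) : (val j == val i) = false.
    by apply/negbTE; rewrite neq_ltn (leq_trans (ltn_ord j) ge_i).
  by rewrite !big_pred0 // expr0n gtn_eqF.
under eq_bigr => i _ do rewrite tnth_mktuple expr_sum_ord.
rewrite (exchange_big_dep xpredT) //= /psum; apply: eq_bigr => j _.
by rewrite (big_pred1 (widen_ord (leq_subr 2 n) j)).
Qed.

End PowerSums.

Section FirstTwoVariables.
Variables (F : fieldType) (n : nat).
Hypothesis n_gt1 : (1 < n)%N.
Implicit Types (f h : {mpoly F[n]}).

Let i0 : 'I_n := Ordinal (ltnW n_gt1).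
Let i1 : 'I_n := Ordinal n_gt1.

Lemma subst_tE f : subst_t f = f \mPo [tuple if i == i1 then - 'X_i0 else 'X_i | i < n].
Proof. by apply: eq_comp_mpoly => i; rewrite !tnth_mktuple (big_pred1 i0). Qed.

Lemma subst_0E f :
  subst_0 f = f \mPo [tuple if (i == i0) || (i == i1) then 0 else 'X_i | i < n].
Proof. by apply: eq_comp_mpoly => -[[|[|i]] lt_in]; rewrite !tnth_mktuple. Qed.

Lemma mono_supersym_psum_odd j : mono_supersym (psum F n (2 * j).+1).
Proof.
split; first exact: psum_symmetric.
rewrite subst_tE subst_0E !psum_comp (bigD1 i0) // [RHS](bigD1 i0) //=.
rewrite (bigD1 i1) // [in RHS](bigD1 i1) //= !tnth_mktuple /=.
have exprN_odd (x : {mpoly F[n]}) : (- x) ^+ (2 * j).+1 = - x ^+ (2 * j).+1.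
  by rewrite exprS exprM sqrrN -exprM mulNr -exprS.
rewrite exprN_odd addrA subrr expr0n /= !add0r.
apply: eq_bigr => i /andP[i_i0 i_i1].
by rewrite !tnth_mktuple (negbTE i_i0) (negbTE i_i1).
Qed.

Lemma msubst_opp_perm h (k l : 'I_n) (s : 'S_n) :
  h \is symmetric -> s i0 = k -> s i1 = l ->
  msubst l (- 'X_k) h = subst_t h \mPo [tuple 'X_(s i) | i < n].
Proof.
move=> sym_h s0 s1; rewrite /msubst [LHS](symmetric_comp_perm _ s sym_h).
rewrite subst_tE comp_mpolyA; apply: eq_comp_mpoly => i.
rewrite !tnth_mktuple -s1 (inj_eq perm_inj).
by case: eqP => _; rewrite ?comp_mpolyN comp_mpolyXU_tnth tnth_mktuple ?s0.
Qed.

Lemma subst_0_proj2 h : h \is symmetric ->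
  exists E : (n - 2).-tuple {mpoly F[n]}, subst_0 h = proj2 h \mPo E.
Proof.
move=> sym_h.
have lt_n2 : (n - 2 < n)%N by lia.
have lt_n1 : (n - 1 < n)%N by lia.
have [||r [r2 r1]] := @exists_perm2 _ (Ordinal lt_n2) (Ordinal lt_n1) i0 i1.
- by rewrite -val_eqE /=; lia.
- by [].
exists [tuple 'X_(r (widen_ord (leq_subr 2 n) j)) | j < n - 2].
have r_low i : (r i == i0) || (r i == i1) = (n - 2 <= i)%N.
  rewrite -r2 -r1 !(inj_eq perm_inj) -!val_eqE /=.
  by case: i => i /= lt_in; lia.
rewrite subst_0E [LHS](symmetric_comp_perm _ r sym_h) /proj2 comp_mpolyA.
apply: eq_comp_mpoly => i; rewrite !tnth_mktuple r_low raddf_sum /=.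
case: leqP => [ge_i | lt_i].
  rewrite big_pred0 // => j; apply/negbTE.
  by rewrite neq_ltn (leq_trans (ltn_ord j) ge_i).
rewrite (big_pred1 (Ordinal lt_i)) // comp_mpolyXU_tnth tnth_mktuple.
by congr 'X_(r _); apply: val_inj.
Qed.

Lemma msubst_oppX_eq0 h (k l : 'I_n) :
  mono_supersym h -> proj2 h = 0 -> k != l -> msubst l (- 'X_k) h = 0.
Proof.
move=> [sym_h h_t] h0 k_l.
have [s [s0 s1]] := @exists_perm2 _ i0 i1 k l isT k_l.
have [E h_E] := subst_0_proj2 sym_h.
by rewrite (msubst_opp_perm sym_h s0 s1) h_t h_E h0 !comp_mpoly0.
Qed.

End FirstTwoVariables.

Lemma proj2_odd_psum_eval (F : fieldType) m n (g : {mpoly F[m]}) :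
  proj2 (odd_psum_eval n g) = odd_psum_eval (n - 2) g.
Proof.
rewrite /proj2 /odd_psum_eval comp_mpolyA; apply: eq_comp_mpoly => j.
by rewrite !tnth_mktuple -/(proj2 _) proj2_psum.
Qed.

Lemma mono_supersym_odd_psum_eval (F : fieldType) m n (g : {mpoly F[m]}) :
  (1 < n)%N -> mono_supersym (odd_psum_eval n g).
Proof.
move=> n_gt1; apply: mono_supersym_comp => j.
by rewrite tnth_mktuple; apply: mono_supersym_psum_odd.
Qed.

Unset Implicit Arguments.
Set Strict Implicit.

Theorem mainTheorem6 (F : fieldType) (n : nat) (f : {mpoly F[n]})
  (m : nat) (g : {mpoly F[m]}) :
  [pchar F] =i pred0 ->
  (3 <= n)%N ->
  mono_supersym f ->
  proj2 f = odd_psum_eval (n - 2) g ->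
  exists q : {mpoly F[n]}, f - odd_psum_eval n g = q * delta F n.
Proof.
move=> _ n_ge3 f_ss pi_f.
have n_gt1 : (1 < n)%N by apply: ltnW.
have h_ss := mono_supersymB f_ss (mono_supersym_odd_psum_eval g n_gt1).
have pi_h : proj2 (f - odd_psum_eval n g) = 0.
  by rewrite /proj2 comp_mpolyB -!/(proj2 _) pi_f proj2_odd_psum_eval subrr.
apply: delta_dvd => k l lt_kl.
have k_l : k != l by rewrite -val_eqE ltn_eqF.
exact: (msubst_oppX_eq0 n_gt1 h_ss pi_h k_l).
Qed.
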